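(* Let $Q$ be a closed polyhedral partially ordered abelian group, $\tau$ a face of $Q_+$, and $M$ a $Q$-module. Then $M$ is $\tau$-coprimary if and only if every nonzero homogeneous element of $M$ divides a $\tau$-coprimary element, where $y\in M_q$ divides $y'\in M_{q'}$ if $q\preceq q'$ and the structure map $M_q\to M_{q'}$ sends $y$ to $y'$.
   Context: A partially ordered abelian group is an abelian group $Q$ generated by a submonoid $Q_+$ whose only unit is $0$; $q\preceq q'$ iff $q'-q\in Q_+$. A face is a submonoid $\sigma\subseteq Q_+$ with $Q_+\setminus\sigma$ an ideal of $Q_+$; $Q$ is polyhedral if it has finitely many faces. A ray is a face that is totally ordered by $\preceq$. $Q$ is closed if for each face $\tau$, the set $Q_+\setminus\tau$ equals $\bigcup_{\rho}(\rho\setminus\{0\})+Q_+$, the union over rays $\rho\not\subseteq\tau$. A $Q$-module is a $Q$-graded vector space $M=\bigoplus_q M_q$ over a field $k$ with compatible structure maps $M_q\to M_{q'}$ for $q\preceq q'$ (equivalently a $Q$-graded $k[Q_+]$-module). For a face $\tau$, $M_\tau=M\otimes_{k[Q_+]}k[Q_++\mathbb Z\tau]$ ($\mathbb Z\tau$ the subgroup generated by $\tau$), with natural map $M\to M_\tau$; $\Gamma_\tau M=\bigcap_{\tau'\not\subseteq\tau}\ker(M\to M_{\tau'})$ over faces $\tau'\not\subseteq\tau$. $M$ is $\tau$-coprimary if $M\to M_\tau$ is injective and $\Gamma_\tau(M_\tau)$ is an essential submodule of $M_\tau$ (meets every nonzero submodule nontrivially). A homogeneous $y\in M_q$ is $\tau$-persistent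 if its image in $M_{q'}$ is nonzero for all $q'\in q+\tau$; it is $\bar\tau$-transient if for each $f\in Q_+\setminus\tau$ the image of $y$ in $M_{q+\lambda f}$ vanishes for all sufficiently large integers $\lambda$; it is $\tau$-coprimary if it is both. *)

From HB Require Import structures.
From mathcomp Require Import all_boot all_order all_algebra.
Set Implicit Arguments. Unset Strict Implicit. Unset Printing Implicit Defensive.
Import GRing.Theory.
Local Open Scope ring_scope.

Section POGroup.
Variable Q : zmodType.
Variable Qp : Q -> Prop.

Definition pole (q q' : Q) : Prop := Qp (q' - q).

Record is_pogroup : Prop := IsPOGroup {
  pog0 : Qp 0;
  pogD : forall a b, Qp a -> Qp b -> Qp (a + b);
  pog_units : forall a, Qp a -> Qp (- a) -> a = 0;
  pog_gen : forall q, exists a b, Qp a /\ Qp b /\ q = a - b }.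

Record is_face (sigma : Q -> Prop) : Prop := IsFace {
  face_sub : forall a, sigma a -> Qp a;
  face0 : sigma 0;
  faceD : forall a b, sigma a -> sigma b -> sigma (a + b);
  face_ideal : forall a b, Qp a -> ~ sigma a -> Qp b -> ~ sigma (a + b) }.

Definition polyhedral : Prop :=
  exists (n : nat) (F : 'I_n -> Q -> Prop),
    forall sigma, is_face sigma -> exists i, forall x, sigma x <-> F i x.

Definition is_ray (rho : Q -> Prop) : Prop :=
  is_face rho /\ forall a b, rho a -> rho b -> pole a b \/ pole b a.

Definition closed_pog : Prop :=
  forall tau, is_face tau ->
    forall a, (Qp a /\ ~ tau a) <->
      exists rho, is_ray rho /\ ~ (forall x, rho x -> tau x) /\
        exists r b, rho r /\ r <> 0 /\ Qp b /\ a = r + b.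

End POGroup.

(* Q-modules: Q-graded k-vector spaces with structure maps M_q -> M_q' *)
(* for q <= q'.  The map qact q q' is only meaningful when q <= q'.    *)
Unset Implicit Arguments.
Record qmodule (k : fieldType) (Q : zmodType) (Qp : Q -> Prop) := QModule {
  qcar :> Q -> lmodType k;
  qact : forall q q' : Q, qcar q -> qcar q';
  qact_linear : forall q q', pole Qp q q' -> linear (qact q q');
  qact_id : forall q (y : qcar q), qact q q y = y;
  qact_comp : forall q q' q'', pole Qp q q' -> pole Qp q' q'' ->
     forall y : qcar q, qact q' q'' (qact q q' y) = qact q q'' y }.
Set Implicit Arguments.
Arguments qact {k Q Qp} _ q q' _.
Arguments qmodule k {Q} Qp.
Arguments qcar {k Q Qp} _ _.

(* "Setoid" presentation of graded modules (data only): carriers,     *)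
(* an equality relation, and the operations.  Used to describe the    *)
(* localizations M_tau concretely without building quotient types.     *)
Record smod (k : fieldType) (Q : zmodType) := SMod {
  scar : Q -> Type;
  seqv : forall q, scar q -> scar q -> Prop;
  szero : forall q, scar q;
  sadd : forall q, scar q -> scar q -> scar q;
  sscale : forall q, k -> scar q -> scar q;
  sact : forall q q', scar q -> scar q' }.
Arguments scar {k Q} _ q.
Arguments seqv {k Q} {_ q} _ _.
Arguments szero {k Q} _ q.
Arguments sadd {k Q} {_ q} _ _.
Arguments sscale {k Q} {_ q} _ _.
Arguments sact {k Q} _ q q' _.

Section SMod.
Variables (k : fieldType) (Q : zmodType) (Qp : Q -> Prop).

Definition smod_of (M : qmodule k Qp) : smod k Q :=
  @SMod k Q (fun q => M q) (fun q => @eq (M q)) (fun q => 0)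
        (fun q => +%R) (fun q => *:%R) (@qact _ _ _ M).

(* Localization N_tau = N (x)_{k[Q_+]} k[Q_+ + Z tau]: an element of degree
   q is a fraction y / x^f with f in tau and y in N_{q+f}; two fractions
   y/x^f and z/x^g are equal iff x^(g+h) y = x^(f+h) z for some h in tau. *)
Record locT (N : smod k Q) (tau : Q -> Prop) (q : Q) : Type := LocT {
  lden : Q; lden_in : tau lden; lnum : scar N (q + lden) }.

Variables (N : smod k Q) (tau : Q -> Prop) (Ht : is_face Qp tau).

Definition loc_eqv q (x y : locT N tau q) : Prop :=
  exists h, tau h /\
    seqv (sact N (q + lden x) (q + lden x + lden y + h) (lnum x))
         (sact N (q + lden y) (q + lden x + lden y + h) (lnum y)).

Definition loc_zero q : locT N tau q :=
  @LocT N tau q 0 (face0 Ht) (szero N (q + 0)).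

Definition loc_add q (x y : locT N tau q) : locT N tau q :=
  @LocT N tau q (lden x + lden y) (faceD Ht (lden_in x) (lden_in y))
    (sadd (sact N (q + lden x) (q + (lden x + lden y)) (lnum x))
          (sact N (q + lden y) (q + (lden x + lden y)) (lnum y))).

Definition loc_scale q (c : k) (x : locT N tau q) : locT N tau q :=
  @LocT N tau q (lden x) (lden_in x) (sscale c (lnum x)).

Definition loc_act q q' (x : locT N tau q) : locT N tau q' :=
  @LocT N tau q' (lden x) (lden_in x) (sact N (q + lden x) (q' + lden x) (lnum x)).

Definition loc : smod k Q :=
  @SMod k Q (locT N tau) loc_eqv loc_zero loc_add loc_scale loc_act.

Definition loc_map q (y : scar N q) : scar loc q :=
  @LocT N tau q 0 (face0 Ht) (sact N q (q + 0) y).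

End SMod.

Section Notions.
Variables (k : fieldType) (Q : zmodType) (Qp : Q -> Prop).

Definition is_submodule (N : smod k Q) (S : forall q, scar N q -> Prop) : Prop :=
  [/\ forall q (x y : scar N q), seqv x y -> S q x -> S q y,
      forall q, S q (szero N q),
      forall q (x y : scar N q), S q x -> S q y -> S q (sadd x y),
      forall q c (x : scar N q), S q x -> S q (sscale c x) &
      forall q q' (x : scar N q), pole Qp q q' -> S q x -> S q' (sact N q q' x)].

Definition nonzero_sub (N : smod k Q) (S : forall q, scar N q -> Prop) : Prop :=
  exists q (x : scar N q), S q x /\ ~ seqv x (szero N q).

Definition essential (N : smod k Q) (S' : forall q, scar N q -> Prop) : Prop :=
  forall S : forall q, scar N q -> Prop, is_submodule S -> nonzero_sub S ->
    exists q (x : scar N q), S q x /\ S' q x /\ ~ seqv x (szero N q).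

Definition Gamma (N : smod k Q) (tau : Q -> Prop) q (x : scar N q) : Prop :=
  forall tau' (H : is_face Qp tau'), ~ (forall a, tau' a -> tau a) ->
    seqv (loc_map H x) (szero (loc N H) q).

Definition coprimary (M : qmodule k Qp) (tau : Q -> Prop) (Ht : is_face Qp tau)
  : Prop :=
  (forall q (y z : M q),
      seqv (loc_map (N := smod_of M) Ht y) (loc_map (N := smod_of M) Ht z) -> y = z)
  /\ essential (N := loc (smod_of M) Ht) (Gamma (N := loc (smod_of M) Ht) tau).

Definition persistent (M : qmodule k Qp) (tau : Q -> Prop) q (y : M q) : Prop :=
  forall f, tau f -> qact M q (q + f) y <> 0.

Definition transient (M : qmodule k Qp) (tau : Q -> Prop) q (y : M q) : Prop :=
  forall f, Qp f -> ~ tau f ->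
    exists n0 : nat, forall lam : nat, (n0 <= lam)%N -> qact M q (q + f *+ lam) y = 0.

Definition coprimary_elt (M : qmodule k Qp) (tau : Q -> Prop) q (y : M q) : Prop :=
  persistent tau y /\ transient tau y.

Definition divides (M : qmodule k Qp) q q' (y : M q) (y' : M q') : Prop :=
  pole Qp q q' /\ qact M q q' y = y'.

End Notions.

(* A fraction w / x^d of M_tau vanishes exactly when w is not tau-persistent, and it lies in
   Gamma_tau exactly when, for every face tau' not contained in tau, some x^h w with h in tau'
   is not tau-persistent.  Hence M -> M_tau is injective iff every nonzero element is
   tau-persistent, a property that divisors inherit from their multiples; and if the numerator
   of a nonzero fraction divides a coprimary element y', then y' / x^d is a nonzero element of
   Gamma_tau in the submodule generated by that fraction.
   Conversely, essentiality applied to the submodule generated by y / 1 gives a nonzero w / x^d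
   in Gamma_tau with x^e w a nonzero scalar multiple of the image of y.  Then w is persistent,
   and it is transient: each f in Q_+ \ tau is r + b with r a nonzero element of a ray rho not
   in tau, some x^h w with h in rho vanishes, and closedness bounds h by a multiple of r. *)

From mathcomp Require Import all_boot all_order all_algebra.
From Stdlib Require Import Classical.
Import GRing.Theory.
Set Implicit Arguments.
Unset Strict Implicit.
Unset Printing Implicit Defensive.
Local Open Scope ring_scope.

Section StructureMaps.
Variables (k : fieldType) (Q : zmodType) (Qp : Q -> Prop) (M : qmodule k Qp).
Local Notation act := (qact M).

Let act_linear p p' : pole Qp p p' -> linear (act p p') := @qact_linear _ _ _ M p p'.

Lemma qactZ p p' c (y : M p) : pole Qp p p' -> act p p' (c *: y) = c *: act p p' y.
Proof. move=> le; exact: (scalable_linear (act_linear le)). Qed.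

Lemma qactD p p' (y z : M p) :
  pole Qp p p' -> act p p' (y + z) = act p p' y + act p p' z.
Proof. by move=> le; have := act_linear le 1 y z; rewrite !scale1r. Qed.

Lemma qactB p p' (y z : M p) :
  pole Qp p p' -> act p p' (y - z) = act p p' y - act p p' z.
Proof. move=> le; exact: (zmod_morphism_linear (act_linear le)). Qed.

Lemma qact0 p p' : pole Qp p p' -> act p p' 0 = 0.
Proof. by move=> le; rewrite -(scale0r 0) qactZ // scale0r. Qed.

Lemma qact_trans p m p' (y : M p) :
  pole Qp p m -> pole Qp m p' -> act m p' (act p m y) = act p p' y.
Proof. move=> le1 le2; exact: (@qact_comp _ _ _ M _ _ _ le1 le2). Qed.

End StructureMaps.

Section POGroup.
Variables (Q : zmodType) (Qp : Q -> Prop) (HQ : is_pogroup Qp).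

Lemma Qp0 : Qp 0. Proof. exact: pog0 HQ. Qed.

Lemma QpD a b : Qp a -> Qp b -> Qp (a + b). Proof. exact: pogD. Qed.

Lemma QpMn a n : Qp a -> Qp (a *+ n).
Proof.
move=> Qa; elim: n => [|n IHn]; first by rewrite mulr0n; apply: Qp0.
by rewrite mulrS; apply: QpD.
Qed.

Lemma pole_refl p : pole Qp p p. Proof. by rewrite /pole subrr; apply: Qp0. Qed.

Lemma pole_trans p m p' : pole Qp p m -> pole Qp m p' -> pole Qp p p'.
Proof. by rewrite /pole => le1 le2; rewrite -(subrK m p') -addrA; apply: QpD. Qed.

Lemma pole_addr p a : Qp a -> pole Qp p (p + a).
Proof. by rewrite /pole addrC addKr. Qed.

Lemma pole_add2l p a b : pole Qp a b -> pole Qp (p + a) (p + b).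
Proof. by rewrite /pole opprD addrACA subrr add0r. Qed.

Lemma pole_add2r p a b : pole Qp a b -> pole Qp (a + p) (b + p).
Proof. by rewrite !(addrC _ p); apply: pole_add2l. Qed.

Lemma pole_mulrn a m n : Qp a -> (m <= n)%N -> pole Qp (a *+ m) (a *+ n).
Proof. by move=> Qa /subnKC <-; rewrite mulrnDr; apply/pole_addr/QpMn. Qed.

Lemma faceMn (sigma : Q -> Prop) a n : is_face Qp sigma -> sigma a -> sigma (a *+ n).
Proof.
move=> F sa; elim: n => [|n IHn]; first by rewrite mulr0n; apply: face0 F.
by rewrite mulrS; apply: (faceD F).
Qed.

Definition face_span (r : Q) (a : Q) : Prop := Qp a /\ exists l : nat, pole Qp a (r *+ l).

Lemma face_span_face r : is_face Qp (face_span r).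
Proof.
split.
- by move=> a [].
- by split; [exact: Qp0 | exists 0%N; rewrite mulr0n; apply: pole_refl].
- move=> a b [Qa [l la]] [Qb [m mb]]; split; first exact: QpD.
  by exists (l + m)%N; rewrite mulrnDr /pole opprD addrACA; apply: QpD.
- move=> a b Qa na Qb [_ [l abl]]; apply: na; split => //; exists l.
  exact: pole_trans (pole_addr a Qb) abl.
Qed.

Lemma face_span_id r : Qp r -> face_span r r.
Proof. by move=> Qr; split => //; exists 1%N; apply: pole_refl. Qed.

(* By closedness, a ray lies in the face spanned by any of its nonzero elements. *)
Lemma closed_ray_le_muln rho r h : closed_pog Qp -> is_ray Qp rho ->
  rho r -> r <> 0 -> rho h -> exists l : nat, pole Qp h (r *+ l).
Proof.
move=> closed ray_rho rr r0 rh.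
suff /(_ h rh) [] : forall x, rho x -> face_span r x by [].
apply: NNPP => not_sub.
suff [_] : Qp r /\ ~ face_span r r by apply; exact: face_span_id (face_sub ray_rho.1 rr).
apply: (closed _ (face_span_face r) r).2; exists rho; split => //; split => //.
by exists r, 0; rewrite addr0; split => //; split => //; split => //; apply: Qp0.
Qed.

End POGroup.

(* [solve_pole] proves [pole Qp p (p + a1 + ... + an)] when each [ai] is a multiple of an element
   of [Qp] or of a face. *)
Ltac solve_pos :=
  solve [ assumption
        | exact: Qp0
        | apply: QpD; solve_pos
        | apply: QpMn; solve_pos
        | match goal with F : is_face _ ?s, H : ?s ?a |- _ ?a => exact: (face_sub F H) end ].

Ltac solve_pole :=
  solve [ exact: pole_refl
        | apply: pole_addr; solve_pos
        | eapply pole_trans; [ assumption | | eapply pole_addr; solve_pos ]; solve_pole ].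

Section Coprimary.
Variables (k : fieldType) (Q : zmodType) (Qp : Q -> Prop) (HQ : is_pogroup Qp).
Variables (tau : Q -> Prop) (Ht : is_face Qp tau) (M : qmodule k Qp).
Local Notation act := (qact M).

Lemma persistent_neq0 q (y : M q) : persistent tau y -> y <> 0.
Proof. by move=> py y0; apply: (py 0 (face0 Ht)); rewrite y0 qact0 //; solve_pole. Qed.

Lemma divides_persistent q q' (y : M q) (y' : M q') :
  divides y y' -> persistent tau y' -> persistent tau y.
Proof.
move=> [le <-] py' f tf yf0; apply: (py' f tf).
have le_f : pole Qp (q + f) (q' + f) by apply: pole_add2r.
rewrite qact_trans //; last by solve_pole.
by rewrite -(qact_trans (m := q + f)) ?yf0 ?qact0 //; solve_pole.
Qed.

Lemma coprimary_elt_act q e (y : M q) :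
  tau e -> coprimary_elt tau y -> coprimary_elt tau (act q (q + e) y).
Proof.
move=> te [py ty]; split.
  move=> f tf; rewrite qact_trans; [|solve_pole|solve_pole].
  by rewrite -addrA; apply: py; apply: (faceD Ht).
move=> f Qf ntf; have [n0 yn0] := ty f Qf ntf; exists n0 => lam le_lam.
rewrite qact_trans; [|solve_pole|solve_pole].
by rewrite (addrAC q e) -(qact_trans (m := q + f *+ lam)) ?yn0 ?qact0 //; solve_pole.
Qed.

Lemma coprimary_eltZ q c (y : M q) :
  c != 0 -> coprimary_elt tau (c *: y) -> coprimary_elt tau y.
Proof.
move=> c0 [py ty]; split.
  by move=> f tf yf0; apply: (py f tf); rewrite qactZ ?yf0 ?scaler0 //; solve_pole.
move=> f Qf ntf; have [n0 yn0] := ty f Qf ntf; exists n0 => lam /yn0.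
rewrite qactZ; last by solve_pole.
by move/eqP; rewrite scaler_eq0 (negbTE c0) => /eqP.
Qed.

(* [act q p] carries no information unless [q <= p], hence the side condition. *)
Definition multiple q (y : M q) p (w : M p) : Prop :=
  exists2 c, w = c *: act q p y & c = 0 \/ pole Qp q p.

Lemma multiple0 q (y : M q) p : multiple y (0 : M p).
Proof. by exists 0; [rewrite scale0r | left]. Qed.

Lemma multipleD q (y : M q) p (w1 w2 : M p) :
  multiple y w1 -> multiple y w2 -> multiple y (w1 + w2).
Proof.
move=> [c1 -> c1P] [c2 -> c2P]; exists (c1 + c2); first by rewrite scalerDl.
by case: c1P c2P => [-> [-> | ?] | ?]; [left; rewrite addr0 | right | right].
Qed.

Lemma multipleZ q (y : M q) p a (w : M p) : multiple y w -> multiple y (a *: w).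
Proof.
move=> [c -> cP]; exists (a * c); first by rewrite scalerA.
by case: cP => [-> | ?]; [left; rewrite mulr0 | right].
Qed.

Lemma multiple_act q (y : M q) p p' (w : M p) :
  pole Qp p p' -> multiple y w -> multiple y (act p p' w).
Proof.
move=> le [c -> [-> | le_q]]; first by rewrite scale0r qact0 //; apply: multiple0.
by exists c; [rewrite qactZ // qact_trans | right; apply: pole_trans le].
Qed.

Lemma multiple_act_le q (y : M q) p m p' (w : M p) :
  pole Qp p m -> pole Qp m p' -> multiple y (act p m w) -> multiple y (act p p' w).
Proof. by move=> le1 le2 /(multiple_act le2); rewrite qact_trans. Qed.

Local Notation N := (smod_of M).
Local Notation Mtau := (loc N Ht).

Lemma loc_eqv0 q (x y : locT N tau q) :
  lnum y = 0 -> loc_eqv x y <-> ~ persistent tau (lnum x).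
Proof.
case: x => dx hx nx; case: y => dy hy ny /= ->; split.
  move=> [h [th /= E]] px; apply: (px (dy + h)); first exact: (faceD Ht).
  by rewrite addrA E qact0 // (addrAC q dx dy); solve_pole.
move=> npx; have [e [te xe0]] : exists e, tau e /\ act (q + dx) (q + dx + e) nx = 0.
  by apply: NNPP => ne; apply: npx => e te xe0; apply: ne; exists e.
exists e; split => //=; rewrite qact0; last by rewrite (addrAC q dx dy); solve_pole.
by rewrite (addrAC (q + dx) dy e) -(qact_trans (m := q + dx + e)) ?xe0 ?qact0 //; solve_pole.
Qed.

Lemma loc_eqv_zero q (x : locT N tau q) :
  seqv (x : scar Mtau q) (szero Mtau q) <-> ~ persistent tau (lnum x).
Proof. exact: loc_eqv0. Qed.

Lemma loc_map_injP :
  (forall q (y z : M q), seqv (loc_map (N := N) Ht y) (loc_map (N := N) Ht z) -> y = z) <->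
  (forall q (y : M q), y <> 0 -> persistent tau y).
Proof.
split=> [inj q y y0 f tf yf0 | pers q y z [h [th]]].
  apply: y0; apply: inj; exists f; split => //=.
  by rewrite !addr0 !qact_id yf0 qact0 //; solve_pole.
rewrite /= !addr0 !qact_id => E; apply/eqP; rewrite -subr_eq0; apply/eqP.
apply: NNPP => yz0; apply: (pers _ _ yz0 h th).
by rewrite qactB ?E ?subrr //; solve_pole.
Qed.

Lemma loc_loc_map_eqv0 (tau' : Q -> Prop) (H' : is_face Qp tau') p (x : locT N tau p) :
  seqv (loc_map (N := Mtau) H' x) (szero (loc Mtau H') p) <->
  exists2 h, tau' h & ~ persistent tau (act (p + lden x) (p + h + lden x) (lnum x)).
Proof.
case: x => d hd n.
have num0 h : tau' h -> lnum (sact Mtau (p + 0) (p + 0 + 0 + h) (szero Mtau (p + 0))) = 0.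
  by move=> th; rewrite /= qact0 //; solve_pole.
split=> [[h [th /(loc_eqv0 _ (num0 h th))]] | [h th E]] /=.
  by rewrite !addr0 qact_id; exists h.
exists h; split => //; apply/(loc_eqv0 _ (num0 h th)).
by rewrite /= !addr0 qact_id.
Qed.

Lemma coprimary_elt_loc p d (hd : tau d) (n : M (p + d)) :
  coprimary_elt tau n ->
  Gamma Qp tau (LocT (N := N) hd n : scar Mtau p) /\
  ~ seqv (LocT (N := N) hd n : scar Mtau p) (szero Mtau p).
Proof.
move=> [pn tn]; split; last by move/loc_eqv_zero.
move=> tau' H' not_sub.
have [a ta' nta] : exists2 a, tau' a & ~ tau a.
  by apply: NNPP => none; apply: not_sub => a ta'; apply: NNPP => nta; apply: none; exists a.
have [m0 nm0] := tn a (face_sub H' ta') nta.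
apply/loc_loc_map_eqv0; exists (a *+ m0); first exact: (faceMn m0 H' ta').
by rewrite /= (addrAC p) nm0 //; move/persistent_neq0; apply.
Qed.

Lemma loc_Gamma_coprimary_elt p (x : locT N tau p) :
  closed_pog Qp -> (forall q (y : M q), y <> 0 -> persistent tau y) ->
  ~ seqv (x : scar Mtau p) (szero Mtau p) -> Gamma Qp tau (x : scar Mtau p) ->
  coprimary_elt tau (lnum x).
Proof.
case: x => d hd n closed pers /= nx Gx; split.
  by apply: NNPP => np; apply: nx; apply/loc_eqv_zero.
move=> f Qf ntf.
have [rho [ray_rho [not_sub [r [b [rr [r0 [Qb ->]]]]]]]] := (closed tau Ht f).1 (conj Qf ntf).
have [h rh not_pers] := (loc_loc_map_eqv0 _ _).1 (Gx rho ray_rho.1 not_sub).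
have hn0 : act (p + d) (p + h + d) n = 0 by apply: NNPP => /pers.
have [l hl] := closed_ray_le_muln HQ closed ray_rho rr r0 rh.
exists l => lam le_lam.
have Qr : Qp r := face_sub ray_rho.1 rr.
have le_h : pole Qp h ((r + b) *+ lam).
  apply: (pole_trans HQ hl); rewrite mulrnDl.
  by apply: (pole_trans HQ (pole_mulrn HQ Qr le_lam)); apply: pole_addr; solve_pos.
have le_hd : pole Qp (p + h + d) (p + d + (r + b) *+ lam).
  by rewrite (addrAC p h d); apply: pole_add2l.
have le_dh : pole Qp (p + d) (p + h + d).
  by rewrite (addrAC p h d); apply: pole_addr; exact: (face_sub ray_rho.1 rh).
by rewrite -(qact_trans _ le_dh le_hd) hn0 qact0.
Qed.

(* The submodule of [M_tau] generated by [y / 1]. *)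
Definition loc_multiple q (y : M q) p (z : locT N tau p) : Prop :=
  exists2 e, tau e & multiple y (act (p + lden z) (p + lden z + e) (lnum z)).

Lemma loc_multiple_eqv q (y : M q) p (z w : locT N tau p) :
  loc_eqv z w -> loc_multiple y z -> loc_multiple y w.
Proof.
case: z w => [dz hz nz] [dw hw nw] [h [th /= E]] [e te /= mult].
exists (dz + h + e); first by do 2!apply: (faceD Ht) => //.
rewrite /= (_ : p + dw + (dz + h + e) = p + dz + dw + h + e); last first.
  by rewrite !addrA (addrAC p dw dz).
have le_w : pole Qp (p + dw) (p + dz + dw + h) by rewrite (addrAC p dz dw); solve_pole.
have le_e : pole Qp (p + dz + dw + h) (p + dz + dw + h + e) by solve_pole.
rewrite -(qact_trans _ le_w le_e) -E qact_trans; [|solve_pole|done].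
by apply: multiple_act_le mult; [solve_pole | apply: pole_add2r; solve_pole].
Qed.

Lemma loc_multipleD q (y : M q) p (z w : locT N tau p) :
  loc_multiple y z -> loc_multiple y w -> loc_multiple y (loc_add Ht z w).
Proof.
case: z w => [dz hz nz] [dw hw nw] [e1 te1 mult1] [e2 te2 mult2] /=.
exists (e1 + e2); first exact: (faceD Ht).
have le_z : pole Qp (p + dz) (p + (dz + dw)) by rewrite addrA; solve_pole.
have le_w : pole Qp (p + dw) (p + (dz + dw)) by rewrite (addrC dz) addrA; solve_pole.
have le_T : pole Qp (p + (dz + dw)) (p + (dz + dw) + (e1 + e2)) by solve_pole.
rewrite qactD // !qact_trans //; apply: multipleD.
  apply: multiple_act_le mult1; first by solve_pole.
  by rewrite /= !addrA (addrAC (p + dz) dw e1); solve_pole.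
apply: multiple_act_le mult2; first by solve_pole.
by rewrite /= (addrC dz) (addrC e1) !addrA (addrAC (p + dw) dz e2); solve_pole.
Qed.

Lemma loc_multiple_submodule q (y : M q) : is_submodule Qp (N := Mtau) (loc_multiple y).
Proof.
split.
- exact: loc_multiple_eqv.
- move=> p; exists 0; first exact: (face0 Ht).
  by rewrite /= qact0; [apply: multiple0 | solve_pole].
- exact: loc_multipleD.
- move=> p a [d hd n] [e te mult]; exists e => //=.
  by rewrite qactZ; [apply: multipleZ | solve_pole].
- move=> p p' [d hd n] le [e te mult]; exists e => //=.
  have le_d : pole Qp (p + d) (p' + d) by apply: pole_add2r.
  rewrite qact_trans //; last by solve_pole.
  by apply: multiple_act_le mult; [solve_pole | do 2!apply: pole_add2r].
Qed.

Lemma coprimary_divides_coprimary_elt q (y : M q) :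
  closed_pog Qp -> coprimary M Ht -> y <> 0 ->
  exists q' (y' : M q'), divides y y' /\ coprimary_elt tau y'.
Proof.
move=> closed [inj ess] y0.
have pers := loc_map_injP.1 inj.
have y_mult : loc_multiple y (loc_map (N := N) Ht y).
  exists 0; first exact: (face0 Ht).
  rewrite /= qact_trans; [|solve_pole|solve_pole].
  by exists 1; [rewrite scale1r | right; solve_pole].
have y_nz : ~ seqv (loc_map (N := N) Ht y : scar Mtau q) (szero Mtau q).
  by move/loc_eqv_zero; rewrite /= addr0 qact_id; apply; apply: pers.
have [p [[d hd n] [[e te [c /= Ec cP]] [z_Gamma z_nz]]]] :
    exists p (z : scar Mtau p), loc_multiple y z /\ Gamma Qp tau z /\ ~ seqv z (szero Mtau p).
  by apply: ess; [apply: loc_multiple_submodule | exists q, (loc_map (N := N) Ht y)].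
have := coprimary_elt_act te (loc_Gamma_coprimary_elt closed pers z_nz z_Gamma).
rewrite /= Ec => cop.
have c0 : c != 0.
  by apply/eqP => c0; move: cop; rewrite c0 scale0r => -[/persistent_neq0 /(_ erefl)].
exists _, (act q (p + d + e) y); split; last exact: coprimary_eltZ c0 cop.
by split => //; case: cP c0 => [-> | //]; rewrite eqxx.
Qed.

Lemma divides_coprimary_elt_coprimary :
  (forall q (y : M q), y <> 0 ->
     exists q' (y' : M q'), divides y y' /\ coprimary_elt tau y') ->
  coprimary M Ht.
Proof.
move=> divs.
have pers q (y : M q) : y <> 0 -> persistent tau y.
  by move=> /divs [q' [y' [dv [py' _]]]]; apply: divides_persistent dv py'.
split; first exact/loc_map_injP.
move=> S [_ _ _ _ S_act] [p [[d hd n] [Sn n_nz]]].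
have /divs [q' [y' [[le_q' <-] cop]]] : n <> 0.
  by apply: persistent_neq0; apply: NNPP => np; apply: n_nz; apply/loc_eqv_zero.
have [p' Ep' le_p] : exists2 p', p' + d = q' & pole Qp p p'.
  by exists (p + (q' - (p + d))); [rewrite addrAC subrKC | apply: pole_addr].
have cop' : coprimary_elt tau (act (p + d) (p' + d) n) by rewrite Ep'.
exists p', (sact Mtau p p' (LocT (N := N) hd n)).
by split; [apply: S_act | apply: coprimary_elt_loc cop'].
Qed.

End Coprimary.

Theorem theorem4p13 (k : fieldType) (Q : zmodType) (Qp : Q -> Prop)
  (HQ : is_pogroup Qp) (Hpoly : polyhedral Qp) (Hclosed : closed_pog Qp)
  (tau : Q -> Prop) (Htau : is_face Qp tau) (M : qmodule k Qp) :
  coprimary M Htau <->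
  (forall q (y : M q), y <> 0 ->
     exists q' (y' : M q'), divides y y' /\ coprimary_elt tau y').
Proof.
split=> [cop q y | divs]; first exact: coprimary_divides_coprimary_elt.
exact: divides_coprimary_elt_coprimary.
Qed.
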